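(* For $i=1,2$, let $l^i,u^i,\hbar^i$ satisfy the standing assumptions below with the same constants $C_\hbar,\underline{c},\overline{c}$, let $\overline{Y}^i\in C^1_G(0,T)$ with $l^i_T\le\hat{\mathbb{E}}[\hbar^i(T,\overline{Y}^i_T)]\le u^i_T$, and let $(Y^i,R^i)\in C^1_G(0,T)\times C^T_B$ be the solution of the backward Skorokhod problem with sublinear expectation associated to $\overline{Y}^i,\hbar^i$ and barriers $l^i,u^i$. Then for any $t\in[0,T]$, $$\begin{aligned}|(R^1_T-R^1_t)-(R^2_T-R^2_t)|&\le\sup_{s\in[t,T]}|\hat{\mathbb{E}}[\overline{Y}^1_s]-\hat{\mathbb{E}}[\overline{Y}^2_s]|+\frac{2\overline{c}}{\underline{c}}\sup_{s\in[t,T]}\hat{\mathbb{E}}[|\overline{Y}^1_s-\overline{Y}^2_s|]\\&\quad+\frac1{\underline{c}}\Big\{\sup_{s\in[t,T]}\max\big[|\overline{H}^1(s,L^1_s(\overline{Y}^2_s),\overline{Y}^2_s)-\overline{H}^2(s,L^1_s(\overline{Y}^2_s),\overline{Y}^2_s)|,\ |\overline{H}^1(s,U^1_s(\overline{Y}^2_s),\overline{Y}^2_s)-\overline{H}^2(s,U^1_s(\overline{Y}^2_s),\overline{Y}^2_s)|\big]\\&\qquad\qquad+\sup_{s\in[t,T]}\max(|l^1_s-l^2_s|,|u^1_s-u^2_s|)\Big\}.\end{aligned}$$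
   Context: Setting: $\hat{\mathbb{E}}$ is the $G$-expectation on $\Omega_T=\{\omega\in C([0,T];\mathbb{R}^d):\omega_0=0\}$; $L^1_G(\Omega_t)$ the completion of bounded Lipschitz cylinder functionals of the canonical process up to $t$ under $\hat{\mathbb{E}}|\cdot|$; $C^1_G(0,T)$ the processes $Y$ with $Y_v\in L^1_G(\Omega_v)$ and $v\mapsto Y_v$ continuous in $\hat{\mathbb{E}}|\cdot|$; $C^T_B$ the deterministic continuous functions on $[0,T]$ of bounded variation starting at $0$. Standing assumptions on $(l,u,\hbar)$: $l,u$ bounded continuous on $[0,T]$ with $\inf_t(u_t-l_t)>0$; $\hbar:[0,T]\times\Omega_T\times\mathbb{R}\to\mathbb{R}$, $(t,y)\mapsto\hbar(t,y)$ uniformly continuous uniformly in $\omega$, strictly increasing in $y$, $\hbar(t,y)\in L^1_G(\Omega_T)$, $\hat{\mathbb{E}}[\lim_{y\downarrow-\infty}\hbar(t,y)]<\inf_sl_s<\sup_su_s<\hat{\mathbb{E}}[\lim_{y\uparrow\infty}\hbar(t,y)]$, $|\hbar(t,y)|\le C_\hbar(1+|y|)$, $\underline{c}|y-y'|\le|\hbar(t,y)-\hbar(t,y')|\le\overline{c}|y-y'|$. For $X\in L^1_G(\Omega_s)$: $\overline{H}^i(s,x,X)=\hat{\mathbb{E}}[\hbar^i(s,x+X-\hat{\mathbb{E}}[X])]$, $L^i_s(X)=(\overline{H}^i)^{-1}(s,\cdot,X)(l^i_s)$, $U^i_s(X)=(\overline{H}^i)^{-1}(s,\cdot,X)(u^i_s)$.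 $(Y,R)\in C^1_G(0,T)\times C^T_B$ solves the backward Skorokhod problem with sublinear expectation associated to $\overline{Y},\hbar,l,u$ if $Y_t=\overline{Y}_t+R_T-R_t$, $l_t\le\hat{\mathbb{E}}[\hbar(t,Y_t)]\le u_t$ for all $t$, and $\int_s^t(\hat{\mathbb{E}}[\hbar(v,Y_v)]-l_v)dR_v\le0$, $\int_s^t(\hat{\mathbb{E}}[\hbar(v,Y_v)]-u_v)dR_v\le0$ for $0\le s\le t\le T$ (such a solution exists and is unique). *)

From Stdlib Require Import Reals Lra ClassicalEpsilon.
Open Scope R_scope.

(* H : the space of random variables (plays L^1_G(Omega_T)); E : the sublinear expectation. *)
Definition sublinear_expectation {Om : Type}
  (H : (Om -> R) -> Prop) (E : (Om -> R) -> R) : Prop :=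
  (forall c : R, H (fun _ => c)) /\
  (forall X Y, H X -> H Y -> H (fun o => X o + Y o)) /\
  (forall (a : R) X, H X -> H (fun o => a * X o)) /\
  (forall X, H X -> H (fun o => Rabs (X o))) /\
  (forall X Y, H X -> H Y -> (forall o, X o <= Y o) -> E X <= E Y) /\
  (forall c : R, E (fun _ => c) = c) /\
  (forall X Y, H X -> H Y -> E (fun o => X o + Y o) <= E X + E Y) /\
  (forall (a : R) X, 0 <= a -> H X -> E (fun o => a * X o) = a * E X).

(* F t plays L^1_G(Omega_t): nondecreasing in t, contained in H. *)
Definition filtration_in {Om : Type} (T : R)
  (H : (Om -> R) -> Prop) (F : R -> (Om -> R) -> Prop) : Prop :=
  (forall s t X, 0 <= s -> s <= t -> t <= T -> F s X -> F t X) /\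
  (forall t X, 0 <= t <= T -> F t X -> H X).

Definition C1G {Om : Type} (T : R) (E : (Om -> R) -> R)
  (F : R -> (Om -> R) -> Prop) (Y : R -> Om -> R) : Prop :=
  (forall v, 0 <= v <= T -> F v (Y v)) /\
  (forall v, 0 <= v <= T -> forall eps, 0 < eps -> exists delta, 0 < delta /\
     forall w, 0 <= w <= T -> Rabs (w - v) < delta ->
       E (fun o => Rabs (Y w o - Y v o)) < eps).

Definition continuous_on_closed (f : R -> R) (a b : R) : Prop :=
  forall t, a <= t <= b -> forall eps, 0 < eps -> exists d, 0 < d /\
    forall s, a <= s <= b -> Rabs (s - t) < d -> Rabs (f s - f t) < eps.

Definition is_partition (s t : R) (x : nat -> R) (n : nat) : Prop :=
  x O = s /\ x n = t /\ forall i, (i < n)%nat -> x i <= x (S i).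

Fixpoint var_sum (g : R -> R) (x : nat -> R) (n : nat) : R :=
  match n with
  | O => 0
  | S k => var_sum g x k + Rabs (g (x (S k)) - g (x k))
  end.

Definition bounded_variation_on (g : R -> R) (a b : R) : Prop :=
  exists M, forall n x, is_partition a b x n -> var_sum g x n <= M.

Definition CTB (T : R) (Rf : R -> R) : Prop :=
  continuous_on_closed Rf 0 T /\ bounded_variation_on Rf 0 T /\ Rf 0 = 0.

Fixpoint rs_sum (f g : R -> R) (x xi : nat -> R) (n : nat) : R :=
  match n with
  | O => 0
  | S k => rs_sum f g x xi k + f (xi k) * (g (x (S k)) - g (x k))
  end.

Definition RS_integral (f g : R -> R) (s t I : R) : Prop :=
  forall eps, 0 < eps -> exists delta, 0 < delta /\
    forall n x xi, is_partition s t x n ->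
      (forall i, (i < n)%nat -> x i <= xi i <= x (S i) /\ x (S i) - x i < delta) ->
      Rabs (rs_sum f g x xi n - I) < eps.

Definition Hbar {Om : Type} (E : (Om -> R) -> R) (hb : R -> Om -> R -> R)
  (s x : R) (X : Om -> R) : R :=
  E (fun o => hb s o (x + X o - E X)).

(* the (unique, by strict monotonicity) x with f x = c *)
Definition inv_at (f : R -> R) (c : R) : R :=
  epsilon (inhabits 0) (fun x => f x = c).

Definition Lof {Om : Type} (E : (Om -> R) -> R) (hb : R -> Om -> R -> R)
  (l : R -> R) (s : R) (X : Om -> R) : R :=
  inv_at (fun x => Hbar E hb s x X) (l s).

Definition Uof {Om : Type} (E : (Om -> R) -> R) (hb : R -> Om -> R -> R)
  (u : R -> R) (s : R) (X : Om -> R) : R :=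
  inv_at (fun x => Hbar E hb s x X) (u s).

Definition standing_assumptions {Om : Type} (T : R) (H : (Om -> R) -> Prop)
  (l u : R -> R) (hb : R -> Om -> R -> R) (C cl cu : R) : Prop :=
  (exists M, forall t, 0 <= t <= T -> Rabs (l t) <= M /\ Rabs (u t) <= M) /\
  continuous_on_closed l 0 T /\ continuous_on_closed u 0 T /\
  (exists d, 0 < d /\ forall t, 0 <= t <= T -> d <= u t - l t) /\
  (forall eps, 0 < eps -> exists delta, 0 < delta /\
     forall o t t' y y', 0 <= t <= T -> 0 <= t' <= T ->
       Rabs (t - t') < delta -> Rabs (y - y') < delta ->
       Rabs (hb t o y - hb t' o y') < eps) /\
  (forall t o y y', 0 <= t <= T -> y < y' -> hb t o y < hb t o y') /\
  (forall t y, 0 <= t <= T -> H (fun o => hb t o y)) /\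
  (forall t o y, 0 <= t <= T -> Rabs (hb t o y) <= C * (1 + Rabs y)) /\
  (forall t o y y', 0 <= t <= T ->
     cl * Rabs (y - y') <= Rabs (hb t o y - hb t o y') /\
     Rabs (hb t o y - hb t o y') <= cu * Rabs (y - y')).

Definition BSP {Om : Type} (T : R) (E : (Om -> R) -> R)
  (F : R -> (Om -> R) -> Prop) (Ybar : R -> Om -> R) (hb : R -> Om -> R -> R)
  (l u : R -> R) (Y : R -> Om -> R) (Rf : R -> R) : Prop :=
  C1G T E F Y /\ CTB T Rf /\
  (* Y_t = Ybar_t + R_T - R_t  (as elements of L^1_G, i.e. E|difference| = 0) *)
  (forall t, 0 <= t <= T ->
     E (fun o => Rabs (Y t o - (Ybar t o + (Rf T - Rf t)))) = 0) /\
  (forall t, 0 <= t <= T ->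
     l t <= E (fun o => hb t o (Y t o)) <= u t) /\
  (forall s t, 0 <= s -> s <= t -> t <= T -> exists I,
     RS_integral (fun v => E (fun o => hb v o (Y v o)) - l v) Rf s t I /\ I <= 0) /\
  (forall s t, 0 <= s -> s <= t -> t <= T -> exists I,
     RS_integral (fun v => E (fun o => hb v o (Y v o)) - u v) Rf s t I /\ I <= 0).

(* Write y^i_v := R^i_T - R^i_v, so that Y^i_v = Yb^i_v + y^i_v.  The map
   g^i_v(y) := E[hb^i(v, Yb^i_v + y)] has slope at least cl, and the barrier constraint
   says that y^i_v lies between the levels where g^i_v reaches l^i_v and u^i_v.  Perturbing
   the inverse of such a map shows that the levels of the two problems differ by at most
   the right-hand side D: recentring costs M1, replacing Yb^1 by Yb^2 inside hb^1 costs
   2 cu M2 / cl, and passing from (hb^1, l^1, u^1) to (hb^2, l^2, u^2) at the points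
   L^1, U^1 costs (M3 + M4) / cl.
   If y^1_t - y^2_t > D, let b be the first time after t at which the gap comes down to
   the midpoint between D and y^1_t - y^2_t.  On [t, b] problem 1 stays strictly above its
   lower barrier and problem 2 strictly below its upper one, so the Skorokhod conditions
   make R^1 nonincreasing and R^2 nondecreasing there; hence the gap at b is at least the
   gap at t, a contradiction.  Exchanging the two problems bounds the other sign. *)

From Stdlib Require Import Reals Lra Lia ClassicalEpsilon FunctionalExtensionality.
Open Scope R_scope.

(** * Real functions on an interval *)

Lemma Rabs_le_inv a b : Rabs a <= b -> - b <= a <= b.
Proof. split_Rabs; lra. Qed.

Lemma continuity_pt_of_eps_delta (f : R -> R) x :
  (forall e, 0 < e -> exists d, 0 < d /\
     forall y, Rabs (y - x) < d -> Rabs (f y - f x) < e) ->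
  continuity_pt f x.
Proof.
  intros Hf e He; destruct (Hf e He) as [d [Hd Hfd]].
  exists d; split; [exact Hd|]. intros y [_ Hy]; exact (Hfd y Hy).
Qed.

Lemma continuous_on_closed_const (c : R) a b : continuous_on_closed (fun _ => c) a b.
Proof. intros x _ e He; exists 1; split; [lra|]; intros; rewrite Rminus_diag, Rabs_R0; lra. Qed.

Lemma continuous_on_closed_sub f g a b :
  continuous_on_closed f a b -> continuous_on_closed g a b ->
  continuous_on_closed (fun v => f v - g v) a b.
Proof.
  intros Hf Hg x Hx e He.
  destruct (Hf x Hx (e / 2) ltac:(lra)) as [d1 [Hd1 Hfd]].
  destruct (Hg x Hx (e / 2) ltac:(lra)) as [d2 [Hd2 Hgd]].
  exists (Rmin d1 d2); split; [now apply Rmin_glb_lt|].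
  intros s Hs Hsx.
  pose proof (Hfd s Hs (Rlt_le_trans _ _ _ Hsx (Rmin_l d1 d2))).
  pose proof (Hgd s Hs (Rlt_le_trans _ _ _ Hsx (Rmin_r d1 d2))).
  replace (f s - g s - (f x - g x)) with ((f s - f x) - (g s - g x)) by ring.
  eapply Rle_lt_trans; [apply Rabs_triang|]. rewrite Rabs_Ropp. lra.
Qed.

Lemma continuous_on_closed_restrict f a b a' b' :
  a <= a' -> b' <= b -> continuous_on_closed f a b -> continuous_on_closed f a' b'.
Proof.
  intros Ha Hb Hf x Hx e He; destruct (Hf x ltac:(lra) e He) as [d [Hd Hfd]].
  exists d; split; [exact Hd|]. intros s Hs; apply Hfd; lra.
Qed.

Lemma continuous_on_closed_uniform f a b : a <= b -> continuous_on_closed f a b ->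
  forall e, 0 < e -> exists d, 0 < d /\ forall x y, a <= x <= b -> a <= y <= b ->
    Rabs (x - y) < d -> Rabs (f x - f y) < e.
Proof.
  intros Hab Hf e He.
  set (clamp := fun x => Rmax a (Rmin b x)).
  assert (Hclamp : forall x y, a <= y <= b ->
            a <= clamp x <= b /\ Rabs (clamp x - y) <= Rabs (x - y)).
  { intros x y Hy; unfold clamp, Rmax, Rmin.
    destruct (Rle_dec b x), (Rle_dec a _); split_Rabs; lra. }
  assert (Hid : forall x, a <= x <= b -> clamp x = x).
  { intros x Hx; unfold clamp, Rmax, Rmin.
    destruct (Rle_dec b x), (Rle_dec a _); lra. }
  assert (Hcont : forall x, a <= x <= b -> continuity_pt (fun y => f (clamp y)) x).
  { intros x Hx; apply continuity_pt_of_eps_delta; intros e' He'.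
    destruct (Hf x Hx e' He') as [d [Hd Hfd]].
    exists d; split; [exact Hd|]; intros y Hy.
    destruct (Hclamp y x Hx) as [Hy' Hyx].
    rewrite (Hid x Hx); apply Hfd; [exact Hy'|lra]. }
  destruct (Heine_cor2 Hcont (mkposreal e He)) as [[d Hd] Hud]; simpl in Hud.
  exists d; split; [exact Hd|]; intros x y Hx Hy Hxy.
  rewrite <- (Hid x Hx), <- (Hid y Hy); auto.
Qed.

Definition min_slope (k : R) (g : R -> R) : Prop :=
  forall x y, x <= y -> g x + k * (y - x) <= g y.

Lemma min_slope_le k g x y : 0 < k -> min_slope k g -> g x <= g y -> x <= y.
Proof.
  intros Hk Hg Hxy; destruct (Rle_or_lt x y) as [|Hyx]; [assumption|].
  pose proof (Hg y x (Rlt_le _ _ Hyx)).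
  pose proof (Rmult_lt_0_compat k (x - y) Hk ltac:(lra)); lra.
Qed.

Lemma min_slope_dist k g x y : 0 <= k -> min_slope k g ->
  k * Rabs (x - y) <= Rabs (g x - g y).
Proof.
  intros Hk Hg; destruct (Rle_or_lt x y) as [Hxy|Hyx].
  - pose proof (Hg x y Hxy).
    rewrite Rabs_minus_sym, (Rabs_minus_sym (g x)), (Rabs_right (y - x)) by lra.
    eapply Rle_trans with (g y - g x); [lra|apply Rle_abs].
  - pose proof (Hg y x (Rlt_le _ _ Hyx)).
    rewrite (Rabs_right (x - y)) by lra.
    eapply Rle_trans with (g x - g y); [lra|apply Rle_abs].
Qed.

Lemma root_perturbation k g g' x x' c c' e : 0 <= k -> min_slope k g ->
  g x = c -> g' x' = c' -> Rabs (g x' - g' x') <= e ->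
  k * Rabs (x - x') <= Rabs (c - c') + e.
Proof.
  intros Hk Hg Hx Hx' He.
  eapply Rle_trans; [exact (min_slope_dist k g x x' Hk Hg)|].
  replace (g x - g x') with ((c - c') - (g x' - g' x')) by (subst; ring).
  eapply Rle_trans; [apply Rabs_triang|]. rewrite Rabs_Ropp; lra.
Qed.

Lemma lipschitz_continuity K g :
  (forall x y, Rabs (g x - g y) <= K * Rabs (x - y)) -> continuity g.
Proof.
  intros HK x; apply continuity_pt_of_eps_delta; intros e He.
  pose proof (Rabs_pos K); pose proof (Rle_abs K).
  exists (e / (Rabs K + 1)); split; [apply Rdiv_lt_0_compat; lra|]; intros y Hy.
  apply Rle_lt_trans with ((Rabs K + 1) * Rabs (y - x)).
  - eapply Rle_trans; [apply HK|].
    apply Rmult_le_compat_r; [apply Rabs_pos|lra].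
  - apply (Rmult_lt_compat_l (Rabs K + 1)) in Hy; [|lra].
    replace ((Rabs K + 1) * (e / (Rabs K + 1))) with e in Hy by (field; lra).
    exact Hy.
Qed.

Lemma min_slope_surjective k K g : 0 < k -> min_slope k g ->
  (forall x y, Rabs (g x - g y) <= K * Rabs (x - y)) -> forall c, exists x, g x = c.
Proof.
  intros Hk Hg HK c.
  assert (Hcont : continuity (fun x => g x - c)).
  { apply (continuity_minus g (fun _ => c)); [exact (lipschitz_continuity K g HK)|].
    apply continuity_const; intros ? ?; reflexivity. }
  pose proof (Rabs_pos (c - g 0)).
  set (r := (Rabs (c - g 0) + 1) / k).
  assert (Hr : k * r = Rabs (c - g 0) + 1) by (unfold r; field; lra).
  assert (Hr0 : 0 < r) by (apply Rdiv_pos_pos; lra).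
  pose proof (Hg 0 r (Rlt_le _ _ Hr0)) as Hright.
  pose proof (Hg (- r) 0 ltac:(lra)) as Hleft.
  destruct (IVT (fun x => g x - c) (- r) r Hcont ltac:(lra)) as [z [_ Hz]].
  - split_Rabs; lra.
  - split_Rabs; lra.
  - exists z; lra.
Qed.

Lemma inv_at_spec (g : R -> R) c : (exists x, g x = c) -> g (inv_at g c) = c.
Proof. intros Hc; exact (epsilon_spec (inhabits 0) (fun x => g x = c) Hc). Qed.

Definition levels_close (g1 g2 : R -> R) (l1 u1 l2 u2 D : R) : Prop :=
  exists a1 a2 b1 b2, g1 a1 = l1 /\ g2 a2 = l2 /\ g1 b1 = u1 /\ g2 b2 = u2 /\
    Rabs (a1 - a2) <= D /\ Rabs (b1 - b2) <= D.

Lemma levels_close_sym g1 g2 l1 u1 l2 u2 D :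
  levels_close g1 g2 l1 u1 l2 u2 D -> levels_close g2 g1 l2 u2 l1 u1 D.
Proof.
  intros (a1 & a2 & b1 & b2 & Ha1 & Ha2 & Hb1 & Hb2 & Ha & Hb).
  exists a2, a1, b2, b1; rewrite Rabs_minus_sym, (Rabs_minus_sym b2); tauto.
Qed.

Lemma gap_forces_reflection (g1 g2 : R -> R) k D e l1 u1 l2 u2 y1 y2 :
  0 < k -> 0 <= e -> min_slope k g1 -> min_slope k g2 ->
  levels_close g1 g2 l1 u1 l2 u2 D ->
  l2 <= g2 y2 -> g1 y1 <= u1 -> D + e <= y1 - y2 ->
  k * e <= g1 y1 - l1 /\ g2 y2 - u2 <= - (k * e).
Proof.
  intros Hk He Hg1 Hg2 (a1 & a2 & b1 & b2 & Ha1 & Ha2 & Hb1 & Hb2 & Ha & Hb) Hy2 Hy1 Hgap.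
  assert (Ha2y : a2 <= y2)
    by (apply (min_slope_le k g2); [exact Hk|exact Hg2|rewrite Ha2; exact Hy2]).
  assert (Hy1b : y1 <= b1)
    by (apply (min_slope_le k g1); [exact Hk|exact Hg1|rewrite Hb1; exact Hy1]).
  apply Rabs_le_inv in Ha; apply Rabs_le_inv in Hb.
  split.
  - pose proof (Hg1 a1 y1 ltac:(lra)).
    pose proof (Rmult_le_compat_l k e (y1 - a1) (Rlt_le _ _ Hk) ltac:(lra)); lra.
  - pose proof (Hg2 y2 b2 ltac:(lra)).
    pose proof (Rmult_le_compat_l k e (b2 - y2) (Rlt_le _ _ Hk) ltac:(lra)); lra.
Qed.

(** * Variation and Riemann-Stieltjes sums *)

Lemma var_sum_nonneg g x n : 0 <= var_sum g x n.
Proof. induction n; simpl; [lra|pose proof (Rabs_pos (g (x (S n)) - g (x n))); lra]. Qed.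

Lemma var_sum_ext g x y n : (forall k, (k <= n)%nat -> x k = y k) ->
  var_sum g x n = var_sum g y n.
Proof.
  induction n; intros Hxy; simpl; [reflexivity|].
  rewrite IHn by (intros; apply Hxy; lia).
  rewrite !Hxy by lia; reflexivity.
Qed.

Lemma var_sum_cons g p x n :
  var_sum g (fun k => match k with O => p | S k => x k end) (S n)
  = Rabs (g (x O) - g p) + var_sum g x n.
Proof. induction n; simpl in *; [lra|rewrite IHn; lra]. Qed.

Lemma var_sum_split g x n k :
  var_sum g x (n + k) = var_sum g x n + var_sum g (fun j => x (n + j)%nat) k.
Proof.
  induction k; simpl; [rewrite Nat.add_0_r; lra|].
  rewrite Nat.add_succ_r; simpl; rewrite IHk; lra.
Qed.

Lemma var_sum_opp g x n : var_sum (fun v => - g v) x n = var_sum g x n.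
Proof.
  induction n; simpl; [reflexivity|].
  rewrite IHn, <- Rabs_Ropp; f_equal; f_equal; ring.
Qed.

Lemma rs_sum_opp f g x xi n :
  rs_sum (fun v => - f v) (fun v => - g v) x xi n = rs_sum f g x xi n.
Proof. induction n; simpl; [reflexivity|rewrite IHn; ring]. Qed.

Lemma partition_in_range s t x n : is_partition s t x n ->
  forall j, (j <= n)%nat -> s <= x j <= t.
Proof.
  intros [Hs [Ht Hmono]].
  assert (Hlow : forall j, (j <= n)%nat -> s <= x j).
  { induction j; intros Hj; [rewrite Hs; lra|].
    specialize (IHj ltac:(lia)); specialize (Hmono j ltac:(lia)); lra. }
  assert (Hup : forall i j, (i + j = n)%nat -> x i <= t).
  { intros i j; revert i; induction j; intros i Hij.
    - rewrite Nat.add_0_r in Hij; subst; lra.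
    - specialize (IHj (S i) ltac:(lia)); specialize (Hmono i ltac:(lia)); lra. }
  intros j Hj; split; [auto|apply (Hup j (n - j)%nat); lia].
Qed.

Lemma var_sum_bound_restrict g T a b V : 0 <= a -> b <= T ->
  (forall n x, is_partition 0 T x n -> var_sum g x n <= V) ->
  forall n x, is_partition a b x n -> var_sum g x n <= V.
Proof.
  intros Ha Hb HV n x Hx.
  pose proof (partition_in_range a b x n Hx) as Hrange.
  destruct Hx as [Hx0 [Hxn Hmono]].
  set (x' := fun k => if Nat.leb k n then x k else T).
  set (y := fun k => match k with O => 0 | S k => x' k end).
  assert (Hx' : forall k, (k <= n)%nat -> x' k = x k)
    by (intros k Hk; unfold x'; rewrite (proj2 (Nat.leb_le k n) Hk); reflexivity).
  assert (Hx'n : x' (S n) = T)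
    by (unfold x'; rewrite (proj2 (Nat.leb_gt (S n) n) ltac:(lia)); reflexivity).
  assert (Hy : is_partition 0 T y (S (S n))).
  { split; [reflexivity|split; [exact Hx'n|]].
    intros [|i] Hi; simpl.
    - rewrite Hx' by lia; pose proof (Hrange O ltac:(lia)); lra.
    - destruct (Nat.eq_dec i n) as [->|Hin].
      + rewrite Hx'n, Hx' by lia; pose proof (Hrange n ltac:(lia)); lra.
      + rewrite !Hx' by lia; apply Hmono; lia. }
  pose proof (HV _ _ Hy) as Hvar.
  change (var_sum g y (S (S n)))
    with (var_sum g y (S n) + Rabs (g (y (S (S n))) - g (y (S n)))) in Hvar.
  unfold y in Hvar at 1; rewrite var_sum_cons in Hvar.
  rewrite (var_sum_ext g x' x n Hx') in Hvar.
  pose proof (Rabs_pos (g (x' O) - g 0)).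
  pose proof (Rabs_pos (g (y (S (S n))) - g (y (S n)))); lra.
Qed.

Lemma rs_sum_ge_const f g x xi n c th :
  (forall j, (j < n)%nat -> Rabs (f (xi j) - c) <= th) ->
  c * (g (x n) - g (x O)) - th * var_sum g x n <= rs_sum f g x xi n.
Proof.
  induction n; intros Hosc; simpl; [lra|].
  specialize (IHn (fun j Hj => Hosc j (Nat.lt_lt_succ_r _ _ Hj))).
  set (dg := g (x (S n)) - g (x n)).
  assert (Hdev : Rabs ((f (xi n) - c) * dg) <= th * Rabs dg)
    by (rewrite Rabs_mult; apply Rmult_le_compat_r; [apply Rabs_pos|apply Hosc; lia]).
  apply Rabs_le_inv in Hdev; unfold dg in *; lra.
Qed.

Lemma exists_nat_mesh L d : 0 < d -> exists N, (0 < N)%nat /\ L / INR N < d.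
Proof.
  intros Hd; destruct (INR_unbounded (L / d)) as [N0 HN0].
  exists (S N0); split; [lia|].
  assert (HN : 0 < INR (S N0)) by (apply lt_0_INR; lia).
  rewrite S_INR in *.
  apply (Rmult_lt_reg_r (INR N0 + 1)); [lra|].
  replace (L / (INR N0 + 1) * (INR N0 + 1)) with L by (field; lra).
  apply (Rmult_lt_compat_l d) in HN0; [|exact Hd].
  replace (d * (L / d)) with L in HN0 by (field; lra); nra.
Qed.

Lemma finite_common_delta (Q : nat -> R -> Prop) N :
  (forall i, (i < N)%nat -> exists d, 0 < d /\ Q i d) ->
  (forall i d d', 0 < d' -> d' <= d -> Q i d -> Q i d') ->
  exists d, 0 < d /\ forall i, (i < N)%nat -> Q i d.
Proof.
  intros HQ Hmono; induction N as [|N IH].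
  - exists 1; split; [lra|intros; lia].
  - destruct IH as [d1 [Hd1 HQ1]]; [intros; apply HQ; lia|].
    destruct (HQ N ltac:(lia)) as [d2 [Hd2 HQ2]].
    exists (Rmin d1 d2); split; [now apply Rmin_glb_lt|].
    intros i Hi; destruct (Nat.eq_dec i N) as [->|HiN].
    + apply (Hmono N d2); [now apply Rmin_glb_lt|apply Rmin_r|exact HQ2].
    + apply (Hmono i d1); [now apply Rmin_glb_lt|apply Rmin_l|apply HQ1; lia].
Qed.

Lemma blockwise_increment_bound (g : R -> R) (X : nat -> R) N K c eta th :
  (forall m, (m < N)%nat ->
     c * (g (X (S m * K)%nat) - g (X (m * K)%nat))
     <= eta + th * var_sum g (fun j => X (m * K + j)%nat) K) ->
  c * (g (X (N * K)%nat) - g (X O)) <= INR N * eta + th * var_sum g X (N * K).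
Proof.
  induction N as [|N IH]; intros Hblock; [simpl; lra|].
  specialize (IH (fun m Hm => Hblock m (Nat.lt_lt_succ_r _ _ Hm))).
  specialize (Hblock N (Nat.lt_succ_diag_r N)).
  replace (S N * K)%nat with (N * K + K)%nat in * by lia.
  rewrite var_sum_split, S_INR; lra.
Qed.

Lemma local_increment_bound f g s t eps th I eta :
  s <= t -> 0 < eps -> 0 < eta ->
  (forall v, s <= v <= t -> eps <= f v) ->
  (forall v, s <= v <= t -> Rabs (f v - f s) <= th) ->
  RS_integral f g s t I -> I <= 0 ->
  exists d, 0 < d /\ forall n x, is_partition s t x n ->
    (forall j, (j < n)%nat -> x (S j) - x j < d) ->
    eps * (g t - g s) <= eta + th * var_sum g x n.
Proof.
  intros Hst Heps Heta Hf Hosc HI HI0.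
  destruct (HI eta Heta) as [d [Hd Hsum]].
  exists d; split; [exact Hd|]; intros n x Hx Hmesh.
  pose proof (partition_in_range s t x n Hx) as Hrange.
  assert (Hrs : rs_sum f g x x n < eta).
  { enough (Hclose : Rabs (rs_sum f g x x n - I) < eta)
      by (apply Rabs_def2 in Hclose; lra).
    apply Hsum; [exact Hx|]; intros j Hj.
    destruct Hx as [_ [_ Hmono]]; pose proof (Hmono j Hj); pose proof (Hmesh j Hj); lra. }
  pose proof (rs_sum_ge_const f g x x n (f s) th
                (fun j Hj => Hosc (x j) (Hrange j ltac:(lia)))) as Hlow.
  destruct Hx as [Hx0 [Hxn _]]; rewrite Hx0, Hxn in Hlow.
  pose proof (Hosc s ltac:(lra)); pose proof (Rabs_pos (f s - f s)).
  pose proof (Rmult_le_pos th _ ltac:(lra) (var_sum_nonneg g x n)).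
  pose proof (Hf s ltac:(lra)).
  destruct (Rle_or_lt 0 (g t - g s)); nra.
Qed.

Definition grid (s h : R) (j : nat) : R := s + INR j * h.

Lemma grid_is_partition s h K : 0 <= h -> is_partition s (grid s h K) (grid s h) K.
Proof.
  intros Hh; unfold grid; split; [simpl; ring|split; [reflexivity|]].
  intros i _; rewrite S_INR; lra.
Qed.

Lemma grid_refine a h h' K m j : INR K * h' = h ->
  grid a h' (m * K + j) = grid (grid a h m) h' j.
Proof. intros HKh; unfold grid; rewrite plus_INR, mult_INR, <- HKh; ring. Qed.

Lemma grid_increment_bound g a h N c eta th d : 0 <= h -> 0 < d ->
  (forall m, (m < N)%nat -> forall n x, is_partition (grid a h m) (grid a h (S m)) x n ->
     (forall j, (j < n)%nat -> x (S j) - x j < d) ->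
     c * (g (grid a h (S m)) - g (grid a h m)) <= eta + th * var_sum g x n) ->
  exists n x, is_partition a (grid a h N) x n /\
    c * (g (grid a h N) - g a) <= INR N * eta + th * var_sum g x n.
Proof.
  intros Hh Hd Hblock.
  destruct (exists_nat_mesh h d Hd) as [K [HK Hh'd]].
  assert (HK0 : 0 < INR K) by (apply lt_0_INR; lia).
  set (h' := h / INR K) in Hh'd.
  assert (HKh : INR K * h' = h) by (unfold h'; field; lra).
  assert (Hh' : 0 <= h') by (apply Rmult_le_pos; [lra|left; apply Rinv_0_lt_compat; lra]).
  assert (Hcorner : forall m, grid a h' (m * K) = grid a h m).
  { intros m; rewrite <- (Nat.add_0_r (m * K)), (grid_refine a h h' K m 0 HKh).
    unfold grid at 1; simpl; ring. }
  exists (N * K)%nat, (grid a h'); split.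
  - rewrite <- Hcorner; apply grid_is_partition; exact Hh'.
  - pose proof (blockwise_increment_bound g (grid a h') N K c eta th) as Hsum.
    rewrite Hcorner in Hsum; replace (grid a h' 0) with a in Hsum by (unfold grid; simpl; ring).
    apply Hsum; intros m Hm; rewrite !Hcorner.
    rewrite (var_sum_ext g _ (grid (grid a h m) h') K)
      by (intros; apply grid_refine; exact HKh).
    apply Hblock; [exact Hm| |].
    + replace (grid a h (S m)) with (grid (grid a h m) h' K)
        by (unfold grid; rewrite S_INR, HKh; ring).
      apply grid_is_partition; exact Hh'.
    + intros j _; unfold grid; rewrite S_INR; lra.
Qed.

Lemma increment_le_variation f g a b eps V : a <= b -> 0 < eps ->
  (forall v, a <= v <= b -> eps <= f v) -> continuous_on_closed f a b ->
  (forall n x, is_partition a b x n -> var_sum g x n <= V) ->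
  (forall s t, a <= s -> s <= t -> t <= b -> exists I, RS_integral f g s t I /\ I <= 0) ->
  forall th, 0 < th -> eps * (g b - g a) <= th + th * V.
Proof.
  intros Hab Heps Hf Hc HV Hint th Hth.
  destruct (continuous_on_closed_uniform f a b Hab Hc th Hth) as [d0 [Hd0 Hunif]].
  destruct (exists_nat_mesh (b - a) d0 Hd0) as [N [HN Hhd0]].
  assert (HN0 : 0 < INR N) by (apply lt_0_INR; lia).
  set (h := (b - a) / INR N) in Hhd0.
  assert (Hb : grid a h N = b) by (unfold grid, h; field; lra).
  assert (Hh : 0 <= h) by (apply Rmult_le_pos; [lra|left; apply Rinv_0_lt_compat; lra]).
  assert (Hpiece : forall m, (m <= N)%nat -> a <= grid a h m <= b).
  { intros m Hm; rewrite <- Hb; unfold grid; apply le_INR in Hm.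
    pose proof (pos_INR m); pose proof (Rmult_le_compat_r h _ _ Hh Hm); nra. }
  assert (HS : forall m, grid a h (S m) = grid a h m + h)
    by (intros; unfold grid; rewrite S_INR; ring).
  destruct (finite_common_delta
    (fun m d => forall n x, is_partition (grid a h m) (grid a h (S m)) x n ->
       (forall j, (j < n)%nat -> x (S j) - x j < d) ->
       eps * (g (grid a h (S m)) - g (grid a h m)) <= th / INR N + th * var_sum g x n) N)
    as [d [Hd Hblock]].
  - intros m Hm.
    pose proof (Hpiece m ltac:(lia)); pose proof (Hpiece (S m) ltac:(lia)); pose proof (HS m).
    destruct (Hint (grid a h m) (grid a h (S m)) ltac:(lra) ltac:(lra) ltac:(lra))
      as [I [HI HI0]].
    apply (local_increment_bound f g _ _ eps th I); try lra; auto.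
    + apply Rdiv_pos_pos; lra.
    + intros v Hv; apply Hf; lra.
    + intros v Hv; left; apply Hunif; try lra; rewrite Rabs_right; lra.
  - intros m dd dd' _ Hdd HQ n x Hx Hmesh.
    apply HQ; [exact Hx|]; intros j Hj; specialize (Hmesh j Hj); lra.
  - destruct (grid_increment_bound g a h N eps (th / INR N) th d Hh Hd Hblock)
      as (n & x & Hx & Hsum).
    rewrite Hb in Hx, Hsum.
    replace (INR N * (th / INR N)) with th in Hsum by (field; lra).
    pose proof (Rmult_le_compat_l th _ _ (Rlt_le _ _ Hth) (HV n x Hx)); lra.
Qed.

Lemma nonpos_RS_integrals_antitone f g a b eps V : a <= b -> 0 < eps ->
  (forall v, a <= v <= b -> eps <= f v) -> continuous_on_closed f a b ->
  (forall n x, is_partition a b x n -> var_sum g x n <= V) ->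
  (forall s t, a <= s -> s <= t -> t <= b -> exists I, RS_integral f g s t I /\ I <= 0) ->
  g b <= g a.
Proof.
  intros Hab Heps Hf Hc HV Hint.
  pose proof (Rabs_pos V); pose proof (Rle_abs V).
  apply Rle_plus_epsilon; intros e He.
  set (th := eps * e / (1 + Rabs V)).
  assert (Hth : 0 < th) by (apply Rdiv_pos_pos; [apply Rmult_lt_0_compat|]; lra).
  pose proof (increment_le_variation f g a b eps V Hab Heps Hf Hc HV Hint th Hth).
  assert (th + th * V <= eps * e).
  { replace (eps * e) with (th * (1 + Rabs V)) by (unfold th; field; lra).
    pose proof (Rmult_le_compat_l th V (Rabs V) (Rlt_le _ _ Hth) ltac:(lra)); lra. }
  apply (Rmult_le_reg_l eps); lra.
Qed.

Lemma nonpos_RS_integrals_monotone f g a b eps V : a <= b -> 0 < eps ->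
  (forall v, a <= v <= b -> f v <= - eps) -> continuous_on_closed f a b ->
  (forall n x, is_partition a b x n -> var_sum g x n <= V) ->
  (forall s t, a <= s -> s <= t -> t <= b -> exists I, RS_integral f g s t I /\ I <= 0) ->
  g a <= g b.
Proof.
  intros Hab Heps Hf Hc HV Hint.
  enough (- g b <= - g a) by lra.
  apply (nonpos_RS_integrals_antitone (fun v => - f v) (fun v => - g v) a b eps V Hab Heps).
  - intros v Hv; specialize (Hf v Hv); lra.
  - intros x Hx e He; destruct (Hc x Hx e He) as [d [Hd Hfd]].
    exists d; split; [exact Hd|]; intros s Hs Hsx.
    replace (- f s - - f x) with (- (f s - f x)) by ring; rewrite Rabs_Ropp; auto.
  - intros n x Hx; rewrite var_sum_opp; auto.
  - intros s t Hs Hst Ht; destruct (Hint s t Hs Hst Ht) as [I [HI HI0]].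
    exists I; split; [|exact HI0]; intros e He; destruct (HI e He) as [d [Hd Hsum]].
    exists d; split; [exact Hd|]; intros n x xi Hx Hmesh; rewrite rs_sum_opp; auto.
Qed.

Lemma first_hitting f t T c : t <= T -> continuous_on_closed f t T ->
  f T <= c -> c < f t ->
  exists b, t <= b <= T /\ f b = c /\ forall r, t <= r <= b -> c <= f r.
Proof.
  intros HtT Hf HT Ht.
  set (Above := fun s => t <= s <= T /\ forall r, t <= r <= s -> c <= f r).
  assert (Ht' : Above t) by (split; [lra|intros r Hr; replace r with t by lra; lra]).
  destruct (completeness Above) as [b [Hub Hlub]];
    [exists T; intros s [Hs _]; lra|exists t; exact Ht'|].
  assert (Htb : t <= b) by (apply Hub; exact Ht').
  assert (HbT : b <= T) by (apply Hlub; intros s [Hs _]; lra).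
  assert (Hbefore : forall r, t <= r < b -> c <= f r).
  { intros r Hr; destruct (Rle_or_lt c (f r)) as [|Hfr]; [assumption|exfalso].
    assert (b <= r); [|lra].
    apply Hlub; intros s [Hs Hs']; destruct (Rle_or_lt s r); [assumption|].
    specialize (Hs' r ltac:(lra)); lra. }
  assert (Hge : c <= f b).
  { destruct (Rle_or_lt c (f b)) as [|Hfb]; [assumption|exfalso].
    destruct (Hf b ltac:(lra) (c - f b) ltac:(lra)) as [d [Hd Hfd]].
    assert (Hbt : t < b) by (destruct (Req_dec t b) as [<-|]; lra).
    pose proof (Rmax_l t (b - d / 2)); pose proof (Rmax_r t (b - d / 2)).
    assert (Rmax t (b - d / 2) < b) by (apply Rmax_lub_lt; lra).
    assert (Hrb : Rabs (Rmax t (b - d / 2) - b) < d) by (rewrite Rabs_left; lra).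
    specialize (Hfd (Rmax t (b - d / 2)) ltac:(lra) Hrb).
    specialize (Hbefore (Rmax t (b - d / 2)) ltac:(lra)).
    apply Rabs_def2 in Hfd; lra. }
  assert (Hle : f b <= c).
  { destruct (Rle_or_lt (f b) c) as [|Hfb]; [assumption|exfalso].
    assert (HbT' : b < T) by (destruct (Req_dec b T) as [->|]; lra).
    destruct (Hf b ltac:(lra) (f b - c) ltac:(lra)) as [d [Hd Hfd]].
    pose proof (Rmin_l T (b + d / 2)); pose proof (Rmin_r T (b + d / 2)).
    assert (b < Rmin T (b + d / 2)) by (apply Rmin_glb_lt; lra).
    assert (Above (Rmin T (b + d / 2))); [|pose proof (Hub _ ltac:(eassumption)); lra].
    split; [lra|]; intros r Hr.
    destruct (Rlt_or_le r b); [apply Hbefore; lra|].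
    assert (Hrb : Rabs (r - b) < d) by (rewrite Rabs_right; lra).
    specialize (Hfd r ltac:(lra) Hrb); apply Rabs_def2 in Hfd; lra. }
  exists b; split; [lra|split; [lra|]].
  intros r Hr; destruct (Req_dec r b) as [->|]; [lra|apply Hbefore; lra].
Qed.

Lemma reflection_gap_le (R1 R2 f1 f2 : R -> R) T t D k :
  0 <= t <= T -> 0 <= D -> 0 < k -> CTB T R1 -> CTB T R2 ->
  continuous_on_closed f1 0 T -> continuous_on_closed f2 0 T ->
  (forall a b, 0 <= a -> a <= b -> b <= T ->
     exists I, RS_integral f1 R1 a b I /\ I <= 0) ->
  (forall a b, 0 <= a -> a <= b -> b <= T ->
     exists I, RS_integral f2 R2 a b I /\ I <= 0) ->
  (forall v e, t <= v <= T -> 0 <= e -> D + e <= (R1 T - R1 v) - (R2 T - R2 v) ->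
     k * e <= f1 v /\ f2 v <= - (k * e)) ->
  (R1 T - R1 t) - (R2 T - R2 t) <= D.
Proof.
  intros Ht HD Hk [HR1c [[V1 HV1] _]] [HR2c [[V2 HV2] _]] Hf1c Hf2c Hint1 Hint2 Hgap.
  set (gap := fun v => (R1 T - R1 v) - (R2 T - R2 v)).
  fold (gap t); destruct (Rle_or_lt (gap t) D) as [|Hgt]; [assumption|exfalso].
  set (e := (gap t - D) / 2).
  assert (Hgapc : continuous_on_closed gap t T).
  { apply continuous_on_closed_restrict with 0 T; try lra.
    apply continuous_on_closed_sub; apply continuous_on_closed_sub;
      auto using continuous_on_closed_const. }
  destruct (first_hitting gap t T (D + e)) as [b [Hb [Hgapb Hbefore]]];
    [lra|exact Hgapc|unfold gap, e; lra|unfold e; lra|].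
  assert (He : 0 < k * e) by (apply Rmult_lt_0_compat; unfold e; lra).
  assert (HR1 : R1 b <= R1 t).
  { apply (nonpos_RS_integrals_antitone f1 R1 t b (k * e) V1); try lra.
    - intros v Hv; apply (Hgap v e); unfold e in *; try lra; apply Hbefore; lra.
    - apply continuous_on_closed_restrict with 0 T; lra || assumption.
    - apply (var_sum_bound_restrict R1 T); lra || assumption.
    - intros s r Hs Hsr Hr; apply Hint1; lra. }
  assert (HR2 : R2 t <= R2 b).
  { apply (nonpos_RS_integrals_monotone f2 R2 t b (k * e) V2); try lra.
    - intros v Hv; apply (Hgap v e); unfold e in *; try lra; apply Hbefore; lra.
    - apply continuous_on_closed_restrict with 0 T; lra || assumption.
    - apply (var_sum_bound_restrict R2 T); lra || assumption.
    - intros s r Hs Hsr Hr; apply Hint2; lra. }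
  unfold e, gap in *; lra.
Qed.

(** * Sublinear expectations *)

Section SublinearExpectation.

Variables (Om : Type) (H : (Om -> R) -> Prop) (E : (Om -> R) -> R).
Hypothesis HE : sublinear_expectation H E.

Lemma H_add_const X c : H X -> H (fun o => X o + c).
Proof.
  destruct HE as (Hc & Hadd & _); intros HX; exact (Hadd X (fun _ => c) HX (Hc c)).
Qed.

Lemma H_abs_sub X Y : H X -> H Y -> H (fun o => Rabs (X o - Y o)).
Proof.
  destruct HE as (_ & Hadd & Hsc & Habs & _); intros HX HY.
  apply Habs; replace (fun o => X o - Y o) with (fun o => X o + (-1) * Y o)
    by (apply functional_extensionality; intros; ring).
  apply Hadd; auto.
Qed.

Lemma E_add_const X c : H X -> E (fun o => X o + c) = E X + c.
Proof.
  pose proof HE as (Hc & _ & _ & _ & _ & Hconst & Hsub & _); intros HX.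
  pose proof (Hsub X (fun _ => c) HX (Hc c)) as Hle; rewrite Hconst in Hle.
  pose proof (Hsub _ (fun _ => - c) (H_add_const X c HX) (Hc (- c))) as Hge.
  rewrite Hconst in Hge.
  replace (fun o => X o + c + - c) with X in Hge
    by (apply functional_extensionality; intros; ring).
  lra.
Qed.

Lemma E_le_mul_add X Y k c : 0 <= k -> H X -> H Y ->
  (forall o, X o <= k * Y o + c) -> E X <= k * E Y + c.
Proof.
  pose proof HE as (_ & _ & Hsc & _ & Hmono & _ & _ & Hhom); intros Hk HX HY Hle.
  rewrite <- Hhom, <- E_add_const by auto.
  apply Hmono; auto; apply H_add_const; auto.
Qed.

Lemma E_le_const X c : H X -> (forall o, X o <= c) -> E X <= c.
Proof.
  pose proof HE as (Hc & _ & _ & _ & Hmono & Hconst & _); intros HX Hle.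
  rewrite <- (Hconst c); apply Hmono; auto.
Qed.

Lemma E_abs_sub_le X Y : H X -> H Y -> Rabs (E X - E Y) <= E (fun o => Rabs (X o - Y o)).
Proof.
  intros HX HY.
  assert (Hone : forall X Y, H X -> H Y -> E X <= E Y + E (fun o => Rabs (X o - Y o))).
  { clear X Y HX HY; intros X Y HX HY.
    pose proof HE as (_ & Hadd & _ & _ & Hmono & _ & Hsub & _).
    eapply Rle_trans; [apply (Hmono X (fun o => Y o + Rabs (X o - Y o)))|].
    - exact HX.
    - apply Hadd; [exact HY|apply H_abs_sub; auto].
    - intros o; pose proof (Rle_abs (X o - Y o)); lra.
    - apply Hsub; [exact HY|apply H_abs_sub; auto]. }
  pose proof (Hone X Y HX HY); pose proof (Hone Y X HY HX).
  replace (fun o => Rabs (Y o - X o)) with (fun o => Rabs (X o - Y o)) in *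
    by (apply functional_extensionality; intros; apply Rabs_minus_sym).
  apply Rabs_le; lra.
Qed.

Lemma E_abs_sub_le_mul_add X Y Z k c : 0 <= k -> H X -> H Y -> H Z ->
  (forall o, Rabs (X o - Y o) <= k * Z o + c) -> Rabs (E X - E Y) <= k * E Z + c.
Proof.
  intros Hk HX HY HZ Hle; eapply Rle_trans; [apply E_abs_sub_le; auto|].
  apply E_le_mul_add; auto; apply H_abs_sub; auto.
Qed.

Lemma E_abs_sub_centered_le X Y : H X -> H Y ->
  E (fun o => Rabs ((X o - E X) - (Y o - E Y))) <= 2 * E (fun o => Rabs (X o - Y o)).
Proof.
  intros HX HY.
  assert (E (fun o => Rabs ((X o - E X) - (Y o - E Y)))
          <= 1 * E (fun o => Rabs (X o - Y o)) + Rabs (E X - E Y)).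
  { apply E_le_mul_add; [lra|apply H_abs_sub; apply H_add_const; assumption|
                          apply H_abs_sub; assumption|].
    intros o; rewrite Rmult_1_l, <- (Rabs_Ropp (E X - E Y)).
    replace (X o - E X - (Y o - E Y)) with ((X o - Y o) + - (E X - E Y)) by ring.
    apply Rabs_triang. }
  pose proof (E_abs_sub_le X Y HX HY); lra.
Qed.

End SublinearExpectation.

Lemma C1G_in {Om : Type} T (H : (Om -> R) -> Prop) E F Y v :
  filtration_in T H F -> C1G T E F Y -> 0 <= v <= T -> H (Y v).
Proof. intros [_ HFH] [HYF _] Hv; exact (HFH v (Y v) Hv (HYF v Hv)). Qed.

Definition hmean {Om : Type} (E : (Om -> R) -> R) (hb : R -> Om -> R -> R)
  (v : R) (Z : Om -> R) (y : R) : R :=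
  E (fun o => hb v o (Z o + y)).

Lemma Hbar_hmean {Om : Type} (E : (Om -> R) -> R) hb v x (X : Om -> R) :
  Hbar E hb v x X = hmean E hb v (fun o => X o - E X) x.
Proof.
  unfold Hbar, hmean; f_equal; apply functional_extensionality; intros; f_equal; ring.
Qed.

Lemma hmean_recenter {Om : Type} (E : (Om -> R) -> R) hb v (Z : Om -> R) y c :
  hmean E hb v Z y = hmean E hb v (fun o => Z o - c) (y + c).
Proof.
  unfold hmean; f_equal; apply functional_extensionality; intros; f_equal; ring.
Qed.

Section ShiftedMean.

Variables (Om : Type) (H : (Om -> R) -> Prop) (E : (Om -> R) -> R).
Variables (T C cl cu : R) (l u : R -> R) (hb : R -> Om -> R -> R).
Hypothesis HE : sublinear_expectation H E.
Hypothesis Hsa : standing_assumptions T H l u hb C cl cu.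
Hypothesis Hcomp : forall t X, 0 <= t <= T -> H X -> H (fun o => hb t o (X o)).
Hypotheses (Hcl : 0 < cl) (Hcu : 0 <= cu).

Lemma hb_lipschitz v o y y' : 0 <= v <= T ->
  Rabs (hb v o y - hb v o y') <= cu * Rabs (y - y').
Proof. destruct Hsa as (_ & _ & _ & _ & _ & _ & _ & _ & Hlip); apply Hlip. Qed.

Lemma hb_min_slope v o : 0 <= v <= T -> min_slope cl (hb v o).
Proof.
  destruct Hsa as (_ & _ & _ & _ & _ & Hinc & _ & _ & Hlip); intros Hv y y' Hyy'.
  destruct (Hlip v o y' y Hv) as [Hlow _].
  destruct (Req_dec y y') as [<-|Hne]; [lra|].
  pose proof (Hinc v o y y' Hv ltac:(lra)).
  rewrite !Rabs_right in Hlow by lra; lra.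
Qed.

Lemma hb_shift_in v Z y : 0 <= v <= T -> H Z -> H (fun o => hb v o (Z o + y)).
Proof.
  intros Hv HZ; apply (Hcomp v (fun o => Z o + y) Hv); apply (H_add_const Om H E HE); auto.
Qed.

Lemma hmean_min_slope v Z : 0 <= v <= T -> H Z -> min_slope cl (hmean E hb v Z).
Proof.
  intros Hv HZ y y' Hyy'; unfold hmean.
  enough (E (fun o => hb v o (Z o + y))
          <= 1 * E (fun o => hb v o (Z o + y')) + - (cl * (y' - y))) by lra.
  apply (E_le_mul_add Om H E HE); try lra; try apply hb_shift_in; auto.
  intros o; pose proof (hb_min_slope v o Hv (Z o + y) (Z o + y') ltac:(lra)).
  replace (Z o + y' - (Z o + y)) with (y' - y) in * by ring; lra.
Qed.

Lemma hmean_lipschitz v Z y y' : 0 <= v <= T -> H Z ->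
  Rabs (hmean E hb v Z y - hmean E hb v Z y') <= cu * Rabs (y - y').
Proof.
  intros Hv HZ; unfold hmean.
  eapply Rle_trans; [apply (E_abs_sub_le Om H E HE); apply hb_shift_in; auto|].
  apply (E_le_const Om H E HE); [apply (H_abs_sub Om H E HE); apply hb_shift_in; auto|].
  intros o; replace (y - y') with (Z o + y - (Z o + y')) by ring.
  apply hb_lipschitz; exact Hv.
Qed.

Lemma hmean_surjective v Z c : 0 <= v <= T -> H Z -> exists y, hmean E hb v Z y = c.
Proof.
  intros Hv HZ; apply (min_slope_surjective cl cu); auto using hmean_min_slope.
  intros; apply hmean_lipschitz; auto.
Qed.

Lemma hmean_lipschitz_rv v Z Z' y : 0 <= v <= T -> H Z -> H Z' ->
  Rabs (hmean E hb v Z y - hmean E hb v Z' y) <= cu * E (fun o => Rabs (Z o - Z' o)).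
Proof.
  intros Hv HZ HZ'; rewrite <- (Rplus_0_r (cu * _)).
  apply (E_abs_sub_le_mul_add Om H E HE); try apply hb_shift_in;
    try apply (H_abs_sub Om H E HE); auto.
  intros o; rewrite Rplus_0_r.
  replace (Z o - Z' o) with (Z o + y - (Z' o + y)) by ring; apply hb_lipschitz; exact Hv.
Qed.

Lemma mean_hb_eq_hmean v Y Z k : 0 <= v <= T -> H Y -> H Z ->
  E (fun o => Rabs (Y o - (Z o + k))) = 0 ->
  E (fun o => hb v o (Y o)) = hmean E hb v Z k.
Proof.
  intros Hv HY HZ Hnull.
  assert (HZk : H (fun o => Z o + k)) by (apply (H_add_const Om H E HE); auto).
  assert (Hle : Rabs (E (fun o => hb v o (Y o)) - hmean E hb v Z k)
                <= cu * E (fun o => Rabs (Y o - (Z o + k))) + 0).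
  { apply (E_abs_sub_le_mul_add Om H E HE); try apply hb_shift_in;
      try apply (H_abs_sub Om H E HE); auto.
    intros o; rewrite Rplus_0_r; apply hb_lipschitz; exact Hv. }
  rewrite Hnull in Hle; apply Rabs_le_inv in Hle; lra.
Qed.

Lemma mean_hb_continuous F Y : filtration_in T H F -> C1G T E F Y ->
  continuous_on_closed (fun v => E (fun o => hb v o (Y v o))) 0 T.
Proof.
  intros [_ HFH] [HYF HYc] v Hv e He.
  pose proof Hsa as (_ & _ & _ & _ & Huc & _).
  assert (HY : forall w, 0 <= w <= T -> H (Y w)) by (intros w Hw; apply (HFH w); auto).
  destruct (Huc (e / 2) ltac:(lra)) as [dh [Hdh Hhb]].
  destruct (HYc v Hv (e / (2 * (cu + 1))) ltac:(apply Rdiv_pos_pos; lra)) as [dY [HdY HYd]].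
  exists (Rmin dh dY); split; [now apply Rmin_glb_lt|]; intros w Hw Hwv.
  pose proof (Rmin_l dh dY); pose proof (Rmin_r dh dY).
  specialize (HYd w Hw ltac:(lra)).
  assert (Hbound : Rabs (E (fun o => hb w o (Y w o)) - E (fun o => hb v o (Y v o)))
                   <= cu * E (fun o => Rabs (Y w o - Y v o)) + e / 2).
  { apply (E_abs_sub_le_mul_add Om H E HE); auto; try apply (H_abs_sub Om H E HE); auto.
    intros o; specialize (Hhb o w v (Y w o) (Y w o) Hw Hv ltac:(lra)
                            ltac:(rewrite Rminus_diag, Rabs_R0; lra)).
    pose proof (hb_lipschitz v o (Y w o) (Y v o) Hv).
    replace (hb w o (Y w o) - hb v o (Y v o))
      with ((hb w o (Y w o) - hb v o (Y w o)) + (hb v o (Y w o) - hb v o (Y v o))) by ring.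
    eapply Rle_trans; [apply Rabs_triang|lra]. }
  assert (cu * E (fun o => Rabs (Y w o - Y v o)) < e / 2).
  { apply Rle_lt_trans with (cu * (e / (2 * (cu + 1)))).
    - apply Rmult_le_compat_l; lra.
    - replace (cu * (e / (2 * (cu + 1)))) with (e / 2 * (cu / (cu + 1))) by (field; lra).
      rewrite <- (Rmult_1_r (e / 2)) at 2; apply Rmult_lt_compat_l; [lra|].
      apply (Rmult_lt_reg_r (cu + 1)); [lra|]; field_simplify; lra. }
  lra.
Qed.

End ShiftedMean.

(** * Comparison of two Skorokhod problems *)

Section TwoProblems.

Variables (Om : Type) (H : (Om -> R) -> Prop) (E : (Om -> R) -> R).
Variables (F : R -> (Om -> R) -> Prop) (T C cl cu : R).
Variables (l1 u1 l2 u2 : R -> R) (hb1 hb2 : R -> Om -> R -> R).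
Hypothesis HE : sublinear_expectation H E.
Hypothesis HF : filtration_in T H F.
Hypotheses (Hcl : 0 < cl) (Hcu : 0 <= cu).
Hypothesis Hsa1 : standing_assumptions T H l1 u1 hb1 C cl cu.
Hypothesis Hsa2 : standing_assumptions T H l2 u2 hb2 C cl cu.
Hypothesis Hcomp1 : forall t X, 0 <= t <= T -> H X -> H (fun o => hb1 t o (X o)).
Hypothesis Hcomp2 : forall t X, 0 <= t <= T -> H X -> H (fun o => hb2 t o (X o)).

Lemma barrier_level_close v X1 X2 c1 c2 x0 y1 y2 M1 M2 M3 M4 :
  0 <= v <= T -> H X1 -> H X2 ->
  Rabs (E X1 - E X2) <= M1 -> E (fun o => Rabs (X1 o - X2 o)) <= M2 ->
  Hbar E hb1 v x0 X2 = c1 ->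
  Rabs (Hbar E hb1 v x0 X2 - Hbar E hb2 v x0 X2) <= M3 -> Rabs (c1 - c2) <= M4 ->
  hmean E hb1 v X1 y1 = c1 -> hmean E hb2 v X2 y2 = c2 ->
  Rabs (y1 - y2) <= M1 + 2 * cu / cl * M2 + / cl * (M3 + M4).
Proof.
  intros Hv HX1 HX2 HM1 HM2 Hx0 HM3 HM4 Hy1 Hy2.
  (* [hb1] and [hb2] are compared only at [x0], so both roots are measured against it. *)
  rewrite Hbar_hmean in Hx0; rewrite !Hbar_hmean in HM3.
  rewrite (hmean_recenter E hb1 v X1 y1 (E X1)) in Hy1.
  rewrite (hmean_recenter E hb2 v X2 y2 (E X2)) in Hy2.
  set (Z1 := fun o => X1 o - E X1) in *; set (Z2 := fun o => X2 o - E X2) in *.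
  assert (HZ1 : H Z1) by exact (H_add_const Om H E HE X1 (- E X1) HX1).
  assert (HZ2 : H Z2) by exact (H_add_const Om H E HE X2 (- E X2) HX2).
  assert (HZ12 : E (fun o => Rabs (Z1 o - Z2 o)) <= 2 * M2)
    by (pose proof (E_abs_sub_centered_le Om H E HE X1 X2 HX1 HX2);
        unfold Z1, Z2; cbv beta; lra).
  assert (Hslope1 : min_slope cl (hmean E hb1 v Z1)) by (eapply hmean_min_slope; eauto).
  assert (Hslope2 : min_slope cl (hmean E hb2 v Z2)) by (eapply hmean_min_slope; eauto).
  assert (Hlip : Rabs (hmean E hb1 v Z1 x0 - hmean E hb1 v Z2 x0)
                 <= cu * E (fun o => Rabs (Z1 o - Z2 o)))
    by (eapply hmean_lipschitz_rv; eauto).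
  pose proof (root_perturbation cl _ _ (y1 + E X1) x0 c1 c1 _
                (Rlt_le _ _ Hcl) Hslope1 Hy1 Hx0 Hlip) as Hstep1.
  rewrite Rabs_minus_sym in HM3.
  pose proof (root_perturbation cl _ _ (y2 + E X2) x0 c2 c1 M3
                (Rlt_le _ _ Hcl) Hslope2 Hy2 Hx0 HM3) as Hstep2.
  rewrite Rminus_diag, Rabs_R0 in Hstep1; rewrite (Rabs_minus_sym c2) in Hstep2.
  pose proof (Rmult_le_compat_l cu _ _ Hcu HZ12).
  assert (Htri : Rabs (y1 - y2)
                 <= Rabs (y1 + E X1 - x0) + Rabs (y2 + E X2 - x0) + Rabs (E X1 - E X2)).
  { replace (y1 - y2) with ((y1 + E X1 - x0) + - (y2 + E X2 - x0) + - (E X1 - E X2)) by ring.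
    eapply Rle_trans; [apply Rabs_triang|]; rewrite Rabs_Ropp.
    eapply Rplus_le_compat_r, Rle_trans; [apply Rabs_triang|]; rewrite Rabs_Ropp; lra. }
  apply (Rmult_le_reg_l cl); [exact Hcl|].
  replace (cl * (M1 + 2 * cu / cl * M2 + / cl * (M3 + M4)))
    with (cl * M1 + 2 * cu * M2 + (M3 + M4)) by (field; lra).
  pose proof (Rmult_le_compat_l cl _ _ (Rlt_le _ _ Hcl) Htri).
  pose proof (Rmult_le_compat_l cl _ _ (Rlt_le _ _ Hcl) HM1); lra.
Qed.

Lemma levels_close_of_bounds v X1 X2 M1 M2 M3 M4 :
  0 <= v <= T -> H X1 -> H X2 ->
  Rabs (E X1 - E X2) <= M1 -> E (fun o => Rabs (X1 o - X2 o)) <= M2 ->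
  Rmax (Rabs (Hbar E hb1 v (Lof E hb1 l1 v X2) X2 - Hbar E hb2 v (Lof E hb1 l1 v X2) X2))
       (Rabs (Hbar E hb1 v (Uof E hb1 u1 v X2) X2 - Hbar E hb2 v (Uof E hb1 u1 v X2) X2))
    <= M3 ->
  Rmax (Rabs (l1 v - l2 v)) (Rabs (u1 v - u2 v)) <= M4 ->
  levels_close (hmean E hb1 v X1) (hmean E hb2 v X2) (l1 v) (u1 v) (l2 v) (u2 v)
    (M1 + 2 * cu / cl * M2 + / cl * (M3 + M4)).
Proof.
  intros Hv HX1 HX2 HM1 HM2 HM3 HM4.
  assert (Hsurj1 : forall X c, H X -> exists y, hmean E hb1 v X y = c)
    by (intros; eapply hmean_surjective; eauto).
  assert (Hsurj2 : forall X c, H X -> exists y, hmean E hb2 v X y = c)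
    by (intros; eapply hmean_surjective; eauto).
  assert (Hinv : forall c, Hbar E hb1 v (inv_at (fun x => Hbar E hb1 v x X2) c) X2 = c).
  { intros c; apply (inv_at_spec (fun x => Hbar E hb1 v x X2)).
    setoid_rewrite Hbar_hmean; apply Hsurj1.
    exact (H_add_const Om H E HE X2 (- E X2) HX2). }
  destruct (Hsurj1 X1 (l1 v) HX1) as [a1 Ha1], (Hsurj2 X2 (l2 v) HX2) as [a2 Ha2],
           (Hsurj1 X1 (u1 v) HX1) as [b1 Hb1], (Hsurj2 X2 (u2 v) HX2) as [b2 Hb2].
  exists a1, a2, b1, b2; repeat split; auto.
  - apply (barrier_level_close v X1 X2 (l1 v) (l2 v) (Lof E hb1 l1 v X2)); auto.
    + apply Hinv.
    + apply Rle_trans with (1 := Rmax_l _ _) (2 := HM3).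
    + apply Rle_trans with (1 := Rmax_l _ _) (2 := HM4).
  - apply (barrier_level_close v X1 X2 (u1 v) (u2 v) (Uof E hb1 u1 v X2)); auto.
    + apply Hinv.
    + apply Rle_trans with (1 := Rmax_r _ _) (2 := HM3).
    + apply Rle_trans with (1 := Rmax_r _ _) (2 := HM4).
Qed.

Lemma reflection_one_sided Yb1 Yb2 Y1 Y2 R1 R2 t D :
  0 <= t <= T -> C1G T E F Yb1 -> C1G T E F Yb2 ->
  BSP T E F Yb1 hb1 l1 u1 Y1 R1 -> BSP T E F Yb2 hb2 l2 u2 Y2 R2 ->
  (forall v, t <= v <= T -> levels_close (hmean E hb1 v (Yb1 v)) (hmean E hb2 v (Yb2 v))
                              (l1 v) (u1 v) (l2 v) (u2 v) D) ->
  (R1 T - R1 t) - (R2 T - R2 t) <= D.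
Proof.
  intros Ht HYb1 HYb2 (HY1 & HR1 & Heq1 & Hbd1 & Hint1 & _)
    (HY2 & HR2 & Heq2 & Hbd2 & _ & Hint2) Hlev.
  assert (HD : 0 <= D).
  { destruct (Hlev t ltac:(lra)) as (a1 & a2 & _ & _ & _ & _ & _ & _ & Ha & _).
    pose proof (Rabs_pos (a1 - a2)); lra. }
  pose proof Hsa1 as (_ & Hl1c & _); pose proof Hsa2 as (_ & _ & Hu2c & _).
  assert (HF1 : forall v, 0 <= v <= T ->
            E (fun o => hb1 v o (Y1 v o)) = hmean E hb1 v (Yb1 v) (R1 T - R1 v))
    by (intros v Hv; eapply mean_hb_eq_hmean; eauto; eapply C1G_in; eauto).
  assert (HF2 : forall v, 0 <= v <= T ->
            E (fun o => hb2 v o (Y2 v o)) = hmean E hb2 v (Yb2 v) (R2 T - R2 v))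
    by (intros v Hv; eapply mean_hb_eq_hmean; eauto; eapply C1G_in; eauto).
  apply (reflection_gap_le R1 R2 (fun v => E (fun o => hb1 v o (Y1 v o)) - l1 v)
           (fun v => E (fun o => hb2 v o (Y2 v o)) - u2 v) T t D cl);
    auto; try (apply continuous_on_closed_sub; [eapply mean_hb_continuous; eauto|auto]).
  intros v e Hv He Hgap; rewrite HF1, HF2 by lra.
  specialize (Hbd1 v ltac:(lra)); specialize (Hbd2 v ltac:(lra)).
  rewrite HF1 in Hbd1 by lra; rewrite HF2 in Hbd2 by lra.
  apply (gap_forces_reflection _ _ cl D e (l1 v) (u1 v) (l2 v) (u2 v)); try tauto.
  - eapply hmean_min_slope; eauto; [lra|apply (C1G_in T H E F); auto; lra].
  - eapply hmean_min_slope; eauto; [lra|apply (C1G_in T H E F); auto; lra].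
  - apply Hlev; lra.
Qed.

End TwoProblems.

Theorem proposition3p10
  (Om : Type) (H : (Om -> R) -> Prop) (E : (Om -> R) -> R)
  (F : R -> (Om -> R) -> Prop) (T : R)
  (HT : 0 < T) (HE : sublinear_expectation H E) (HF : filtration_in T H F)
  (C cl cu : R) (Hcl : 0 < cl) (Hcu : 0 < cu)
  (l1 u1 l2 u2 : R -> R) (hb1 hb2 : R -> Om -> R -> R)
  (Hsa1 : standing_assumptions T H l1 u1 hb1 C cl cu)
  (Hsa2 : standing_assumptions T H l2 u2 hb2 C cl cu)
  (Hcomp1 : forall t X, 0 <= t <= T -> H X -> H (fun o => hb1 t o (X o)))
  (Hcomp2 : forall t X, 0 <= t <= T -> H X -> H (fun o => hb2 t o (X o)))
  (Yb1 Yb2 Y1 Y2 : R -> Om -> R) (R1 R2 : R -> R)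
  (HYb1 : C1G T E F Yb1) (HYb2 : C1G T E F Yb2)
  (HT1 : l1 T <= E (fun o => hb1 T o (Yb1 T o)) <= u1 T)
  (HT2 : l2 T <= E (fun o => hb2 T o (Yb2 T o)) <= u2 T)
  (Hsol1 : BSP T E F Yb1 hb1 l1 u1 Y1 R1)
  (Hsol2 : BSP T E F Yb2 hb2 l2 u2 Y2 R2) :
  forall t, 0 <= t <= T ->
  forall M1 M2 M3 M4 : R,
    (forall s, t <= s <= T -> Rabs (E (Yb1 s) - E (Yb2 s)) <= M1) ->
    (forall s, t <= s <= T -> E (fun o => Rabs (Yb1 s o - Yb2 s o)) <= M2) ->
    (forall s, t <= s <= T ->
       Rmax
         (Rabs (Hbar E hb1 s (Lof E hb1 l1 s (Yb2 s)) (Yb2 s)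
                - Hbar E hb2 s (Lof E hb1 l1 s (Yb2 s)) (Yb2 s)))
         (Rabs (Hbar E hb1 s (Uof E hb1 u1 s (Yb2 s)) (Yb2 s)
                - Hbar E hb2 s (Uof E hb1 u1 s (Yb2 s)) (Yb2 s))) <= M3) ->
    (forall s, t <= s <= T -> Rmax (Rabs (l1 s - l2 s)) (Rabs (u1 s - u2 s)) <= M4) ->
    Rabs ((R1 T - R1 t) - (R2 T - R2 t))
      <= M1 + 2 * cu / cl * M2 + / cl * (M3 + M4).
Proof.
  intros t Ht M1 M2 M3 M4 HM1 HM2 HM3 HM4.
  assert (Hcu' : 0 <= cu) by lra.
  assert (Hlev : forall v, t <= v <= T ->
            levels_close (hmean E hb1 v (Yb1 v)) (hmean E hb2 v (Yb2 v))
              (l1 v) (u1 v) (l2 v) (u2 v) (M1 + 2 * cu / cl * M2 + / cl * (M3 + M4))).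
  { intros v Hv.
    apply (levels_close_of_bounds Om H E T C cl cu l1 u1 l2 u2 hb1 hb2); auto;
      try lra; apply (C1G_in T H E F); auto; lra. }
  apply Rabs_le; split.
  - enough ((R2 T - R2 t) - (R1 T - R1 t) <= M1 + 2 * cu / cl * M2 + / cl * (M3 + M4))
      by lra.
    apply (reflection_one_sided Om H E F T C cl cu l2 u2 l1 u1 hb2 hb1 HE HF Hcl Hcu'
             Hsa2 Hsa1 Hcomp2 Hcomp1 Yb2 Yb1 Y2 Y1); auto.
    intros v Hv; apply levels_close_sym, Hlev, Hv.
  - apply (reflection_one_sided Om H E F T C cl cu l1 u1 l2 u2 hb1 hb2 HE HF Hcl Hcu'
             Hsa1 Hsa2 Hcomp1 Hcomp2 Yb1 Yb2 Y1 Y2); auto.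
Qed.
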